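(* Let $n$ be a positive integer and let $D$ be a set of divisors of $n$ such that $\gcd(D\cup\{n\})=1$. Let $t$ be the size of a smallest subset of $D$ which generates $\mathbb{Z}_n$ as an additive group. Let $S=\bigcup_{d\in D}G_n(d)$ and $\mathcal G=G(n;S)$. Then $$t\leq \operatorname{diam}\mathcal G\leq 2t+1.$$
   Context: For a divisor $d$ of $n$, $G_n(d)=\{k : 1\le k\le n-1,\ \gcd(k,n)=d\}$. For a set $S\subseteq\{1,\dots,n-1\}$ with $s\in S$ iff $n-s\in S$, the circulant graph $G(n;S)$ is the undirected graph on vertex set $\mathbb{Z}_n$ in which $i$ and $j$ are adjacent iff $i-j \bmod n\in S$. $\operatorname{diam}$ denotes the graph diameter (maximum over vertex pairs of the shortest-path distance). *)

From mathcomp Require Import all_boot.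
Set Implicit Arguments. Unset Strict Implicit. Unset Printing Implicit Defensive.

Definition Gn (n d : nat) : pred nat :=
  [pred k | (1 <= k <= n.-1) && (gcdn k n == d)].

Definition Sunion (n : nat) (D : seq nat) : pred nat :=
  [pred k | has (fun d => k \in Gn n d) D].

Definition circ_adj (n : nat) (S : pred nat) : rel 'I_n :=
  fun i j => ((i + n - j) %% n) \in S.

Definition walkb (n : nat) (e : rel 'I_n) (k : nat) (i j : 'I_n) : bool :=
  [exists p : k.-tuple 'I_n, path e i p && (last i p == j)].

(* shortest-path distance: least k < n with a walk of length k from i to j;
   (a shortest path in a graph on n vertices has length <= n-1);
   value n (standing for "infinity") if j is unreachable from i *)
Definition gdist (n : nat) (e : rel 'I_n) (i j : 'I_n) : nat :=
  find (fun k => walkb e k i j) (iota 0 n).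

Definition gdiam (n : nat) (e : rel 'I_n) : nat :=
  \max_(i : 'I_n) \max_(j : 'I_n) gdist e i j.

(* E generates Z_n as an additive group: every residue is a combination
   (with natural coefficients, which suffices in a finite group) of E mod n *)
Definition generates_Zn (n : nat) (E : seq nat) : Prop :=
  forall x : nat, exists c : nat -> nat,
    x = \sum_(e <- E) c e * e %[mod n].

Definition min_gen_size (n : nat) (D : seq nat) (t : nat) : Prop :=
  (exists E : seq nat, [/\ uniq E, {subset E <= D}, generates_Zn n E & size E = t])
  /\ (forall E : seq nat, uniq E -> {subset E <= D} -> generates_Zn n E -> t <= size E).

From mathcomp Require Import all_boot zify.

Set Implicit Arguments.
Unset Strict Implicit.
Unset Printing Implicit Defensive.

(* A walk of length k from j to i in G(n;S) is a sequence of k elements of S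
   summing to i - j modulo n.  Lower bound: the gcds with n of the steps of a
   walk from 0 to 1 lie in D and generate Z_n, so there are at least t steps.
   Upper bound: fix a generating subset E of D of size t.  For e in E with
   e < n, every residue 2be is a sum u e + v e of two elements of G_n(e),
   because every even residue modulo n/e is a sum of two units; hence every
   residue of the form 2 * sum c_e e is reached in 2t steps.  The remaining
   residues are odd with n even; then E contains an odd e, which is itself a
   step, and the rest is even. *)

Lemma coprime_prime_ndvd x m : 0 < m ->
  (forall p, prime p -> p %| m -> ~~ (p %| x)) -> coprime x m.
Proof.
move=> m_gt0 ndvd; apply: contraT => not_coprime.
have g_gt1 : 1 < gcdn x m.
  by rewrite ltn_neqAle eq_sym not_coprime gcdn_gt0 m_gt0 orbT.
have p_dvd_m := dvdn_trans (pdiv_dvd _) (dvdn_gcdr x m).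
have := ndvd _ (pdiv_prime g_gt1) p_dvd_m.
by rewrite (dvdn_trans (pdiv_dvd _) (dvdn_gcdl x m)).
Qed.

Lemma prime_dvdn_part pi m p : 0 < m -> prime p -> p %| m ->
  (p %| m`_pi) = (p \in pi).
Proof.
move=> m_gt0 p_prime p_dvd_m; apply/idP/idP => [p_dvd_part | p_pi].
  by apply: (pnatPpi (part_pnat pi m) _); rewrite mem_primes p_prime part_gt0.
move: p_dvd_m; rewrite -{1}(partnC pi m_gt0) Euclid_dvdM // => /orP[// | p_dvd_part'].
have : p \in pi^'.
  by apply: (pnatPpi (part_pnat pi^' m) _); rewrite mem_primes p_prime part_gt0.
by rewrite inE p_pi.
Qed.

Lemma sum_of_two_coprime m b : 0 < m ->
  exists u v, [/\ coprime u m, coprime v m & u + v = 2 * b %[mod m]].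
Proof.
move=> m_gt0.
pose w := m`_[pred p | ~~ (p %| b)].
(* Each prime divisor of m divides exactly one of b and w, so it divides
   neither b + w nor b - w = b + w * (m - 1) modulo m. *)
have dvd_w p : prime p -> p %| m -> (p %| w) = ~~ (p %| b).
  by move=> p_prime p_dvd_m; rewrite prime_dvdn_part.
have ndvd_pred p : prime p -> p %| m -> ~~ (p %| m.-1).
  move=> p_prime p_dvd_m; apply/negP => p_dvd_pred.
  have : p %| gcdn m.-1 m by rewrite dvdn_gcd p_dvd_pred.
  rewrite -[in gcdn _ m](prednK m_gt0) (eqP (coprimenS _)) dvdn1 => /eqP p1.
  by rewrite p1 in p_prime.
exists (b + w), (b + w * m.-1); split.
- apply: coprime_prime_ndvd => // p p_prime p_dvd_m.
  case p_b : (p %| b); first by rewrite dvdn_addr // dvd_w // p_b.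
  by rewrite dvdn_addl ?dvd_w ?p_b.
- apply: coprime_prime_ndvd => // p p_prime p_dvd_m.
  case p_b : (p %| b).
    by rewrite dvdn_addr // Euclid_dvdM // dvd_w // p_b ndvd_pred.
  by rewrite dvdn_addl ?dvdn_mulr ?dvd_w ?p_b.
- have -> : b + w + (b + w * m.-1) = w * m + 2 * b.
    by rewrite -[in RHS](prednK m_gt0) mulnS; lia.
  by rewrite modnMDl.
Qed.

Lemma mulmod_in_Gn n e u : e %| n -> e < n -> coprime u (n %/ e) ->
  (u * e) %% n \in Gn n e.
Proof.
move=> e_dvd_n e_lt_n u_coprime.
have n_gt0 : 0 < n by apply: leq_ltn_trans e_lt_n.
have gcd_e : gcdn ((u * e) %% n) n = e.
  rewrite gcdn_modl -[X in gcdn _ X](divnK e_dvd_n) -muln_gcdl.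
  by rewrite (eqP u_coprime) mul1n.
rewrite inE gcd_e eqxx andbT; apply/andP; split; last by rewrite -ltnS prednK ?ltn_pmod.
rewrite lt0n; apply: contraTneq e_lt_n => mod_eq0.
by rewrite -gcd_e mod_eq0 gcd0n ltnn.
Qed.

Lemma mem_Sunion n D d k : d \in D -> k \in Gn n d -> k \in Sunion n D.
Proof. by move=> dD k_Gn; apply/hasP; exists d. Qed.

Lemma Sunion_lt n D k : k \in Sunion n D -> k < n.
Proof. by case/hasP => d _; rewrite inE => /andP[/andP[k_gt0 k_le] _]; lia. Qed.

Lemma sum_eq_lincomb (E s : seq nat) : uniq E ->
  (forall k, k \in s -> exists2 e, e \in E & e %| k) ->
  exists c : nat -> nat, \sum_(k <- s) k = \sum_(e <- E) c e * e.
Proof.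
move=> E_uniq; elim: s => [|k s IH] s_dvd.
  by exists (fun=> 0); rewrite big_nil big1.
have [c sum_s] := IH (fun k' ks => s_dvd k' (mem_behead (s := k :: s) ks)).
have [e eE e_dvd_k] := s_dvd k (mem_head k s).
exists (fun e' => c e' + (e' == e) * (k %/ e)).
rewrite big_cons sum_s [RHS](eq_bigr (fun e' => c e' * e' + (e' == e) * (k %/ e) * e'));
  last by move=> e' _; rewrite mulnDl.
rewrite big_split /= addnC; congr (_ + _).
rewrite (bigD1_seq e) //= eqxx mul1n divnK // big1 ?addn0 // => e' /negbTE ->.
by rewrite mul0n.
Qed.

Lemma generates_Zn_of_one n E (c : nat -> nat) :
  1 = \sum_(e <- E) c e * e %[mod n] -> generates_Zn n E.
Proof.
move=> one x; exists (fun e => x * c e).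
rewrite -{1}[x]muln1 -modnMmr one modnMmr big_distrr /=.
by congr (_ %% n); apply: eq_bigr => e _; rewrite mulnA.
Qed.

Lemma min_gen_size_le n D t : 0 < n -> (forall d, d \in D -> d %| n) ->
  min_gen_size n D t -> t <= n.
Proof.
move=> n_gt0 D_dvd [[E [E_uniq E_sub _ <-]] _].
rewrite -[n](size_iota 1); apply: uniq_leq_size => // d dE.
have d_dvd_n := D_dvd d (E_sub d dE).
by rewrite mem_iota add1n ltnS (dvdn_gt0 n_gt0 d_dvd_n) dvdn_leq.
Qed.

Lemma min_gen_size_le_steps n D t s : min_gen_size n D t ->
  all (mem (Sunion n D)) s -> \sum_(k <- s) k = 1 %[mod n] -> t <= size s.
Proof.
move=> [_ t_min] s_S sum_s.
set E := undup [seq gcdn k n | k <- s].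
have E_sub : {subset E <= D}.
  move=> d; rewrite mem_undup => /mapP[k ks ->].
  by have /hasP[d' d'D] := allP s_S k ks; rewrite inE => /andP[_ /eqP ->].
have [c sum_c] : exists c, \sum_(k <- s) k = \sum_(e <- E) c e * e.
  apply: sum_eq_lincomb (undup_uniq _) _ => k ks.
  by exists (gcdn k n); [rewrite mem_undup (map_f (gcdn^~ n)) | exact: dvdn_gcdl].
apply: leq_trans (t_min E (undup_uniq _) E_sub _) _.
  by apply: (@generates_Zn_of_one _ _ c); rewrite -sum_c sum_s.
by rewrite (leq_trans (size_undup _)) ?size_map.
Qed.

Lemma modn_subnDK n i m : m <= i + n -> (i + n - m) %% n + m = i %[mod n].
Proof. by move=> m_le; rewrite modnDml subnK ?modnDr. Qed.

Section CirculantWalks.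

Variables (n : nat) (S : pred nat).
Local Notation adj := (@circ_adj n S).

Lemma path_circ_steps (i : 'I_n) (p : seq 'I_n) : path adj i p ->
  exists s : seq nat, [/\ size s = size p, all (mem S) s &
    \sum_(k <- s) k + last i p = i %[mod n]].
Proof.
elim: p i => [|x p IH] i /=; first by exists [::]; rewrite big_nil.
case/andP => adj_ix /IH[s [size_s s_S sum_s]].
exists ((i + n - x) %% n :: s); split => /=; [by rewrite size_s | by rewrite s_S andbT | ].
rewrite big_cons -addnA -modnDmr sum_s modnDmr modn_subnDK //.
by rewrite (leq_trans (ltnW (ltn_ord x))) ?leq_addl.
Qed.

Lemma walkb_circ_steps k (i j : 'I_n) : walkb adj k i j ->
  exists s : seq nat, [/\ size s = k, all (mem S) s &
    \sum_(x <- s) x + j = i %[mod n]].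
Proof.
case/existsP => p /andP[/path_circ_steps[s [size_s s_S sum_s]] /eqP <-].
by exists s; rewrite size_s size_tuple.
Qed.

Hypothesis S_lt_n : {in S, forall k, k < n}.

Lemma steps_circ_walkb s (i j : 'I_n) : all (mem S) s ->
  \sum_(k <- s) k + j = i %[mod n] -> walkb adj (size s) i j.
Proof.
elim: s i => [|k s IH] i /=.
  rewrite big_nil add0n !modn_small // => _ /val_inj ->.
  by apply/existsP; exists [tuple]; rewrite /= eqxx.
case/andP => k_S s_S sum_ks.
have n_gt0 : 0 < n by apply: leq_ltn_trans (ltn_ord i).
have k_lt_n := S_lt_n k_S.
pose x := Ordinal (ltn_pmod (i + n - k) n_gt0).
have x_k : x + k = i %[mod n] by apply: modn_subnDK; lia.
have /existsP[p /andP[p_path p_last]] : walkb adj (size s) x j.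
  by apply: IH s_S _; apply/eqP; rewrite -(eqn_modDr k) x_k -sum_ks big_cons addnC addnA.
suff adj_ix : adj i x.
  by apply/existsP; exists [tuple of x :: p]; rewrite /= adj_ix p_path.
suff x_step : (i + n - x) %% n = k by rewrite /circ_adj x_step.
rewrite -(modn_small k_lt_n); apply/eqP; rewrite -(eqn_modDr x) subnK.
  by rewrite modnDr [k + x]addnC x_k.
by have := ltn_ord x; lia.
Qed.

End CirculantWalks.

Section Distance.

Variables (n : nat) (e : rel 'I_n).

Lemma gdist_le k i j : walkb e k i j -> gdist e i j <= k.
Proof.
move=> walk_k; rewrite /gdist; case: (ltnP k n) => [k_lt_n | n_le_k].
  by rewrite leqNgt; apply/negP => /(before_find 0); rewrite nth_iota // add0n walk_k.
by apply: leq_trans (find_size _ _) _; rewrite size_iota.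
Qed.

Lemma gdist_walkb i j : gdist e i j < n -> walkb e (gdist e i j) i j.
Proof.
rewrite /gdist => d_lt_n.
have has_walk : has (fun k => walkb e k i j) (iota 0 n) by rewrite has_find size_iota.
by have := nth_find 0 has_walk; rewrite nth_iota ?add0n.
Qed.

End Distance.

Lemma double_multiple_steps n D e b : 0 < n -> e \in D -> e %| n ->
  exists s, [/\ all (mem (Sunion n D)) s, size s <= 2 &
    \sum_(k <- s) k = 2 * (b * e) %[mod n]].
Proof.
move=> n_gt0 eD e_dvd_n.
have [e_lt_n | n_le_e] := ltnP e n; last first.
  have -> : e = n by apply/eqP; rewrite eqn_leq n_le_e dvdn_leq.
  by exists [::]; rewrite big_nil mod0n mulnA modnMl.
have m_gt0 : 0 < n %/ e by rewrite divn_gt0 ?(dvdn_gt0 n_gt0) // ltnW.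
have [u [v [u_coprime v_coprime uv]]] := sum_of_two_coprime b m_gt0.
exists [:: (u * e) %% n; (v * e) %% n]; split=> [|//|].
  by rewrite /= !(mem_Sunion eD) ?mulmod_in_Gn.
rewrite !big_cons big_nil addn0 modnDm -mulnDl mulnA -(divnK e_dvd_n).
by rewrite -!muln_modl uv.
Qed.

Lemma double_lincomb_steps n D E (c : nat -> nat) : 0 < n ->
  (forall d, d \in D -> d %| n) -> {subset E <= D} ->
  exists s, [/\ all (mem (Sunion n D)) s, size s <= 2 * size E &
    \sum_(k <- s) k = 2 * \sum_(e <- E) c e * e %[mod n]].
Proof.
move=> n_gt0 D_dvd; elim: E => [|e E IH] E_sub.
  by exists [::]; split; rewrite ?big_nil.
have eD : e \in D by apply: E_sub; rewrite mem_head.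
have [s1 [s1_S size_s1 sum_s1]] := double_multiple_steps (c e) n_gt0 eD (D_dvd e eD).
have [|s2 [s2_S size_s2 sum_s2]] := IH.
  by move=> d dE; apply: E_sub; rewrite inE dE orbT.
exists (s1 ++ s2); split; first by rewrite all_cat s1_S.
  by rewrite size_cat mulnS leq_add.
by rewrite big_cat -modnDm sum_s1 sum_s2 modnDm big_cons mulnDr.
Qed.

Lemma double_steps n D t y : 0 < n -> (forall d, d \in D -> d %| n) ->
  min_gen_size n D t ->
  exists s, [/\ all (mem (Sunion n D)) s, size s <= 2 * t &
    \sum_(k <- s) k = 2 * y %[mod n]].
Proof.
move=> n_gt0 D_dvd [[E [_ E_sub E_gen <-]] _].
have [c y_c] := E_gen y.
have [s [s_S size_s sum_s]] := double_lincomb_steps c n_gt0 D_dvd E_sub.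
by exists s; split; rewrite // sum_s -modnMmr -y_c modnMmr.
Qed.

Lemma generates_Zn_has_odd n E : ~~ odd n -> generates_Zn n E -> has odd E.
Proof.
move=> n_even E_gen; apply: contraT => /hasPn E_even.
have [c one] := E_gen 1.
have sum_even : ~~ odd (\sum_(e <- E) c e * e).
  rewrite -dvdn2 big_seq dvdn_sum // => e eE.
  by rewrite dvdn_mull // dvdn2 E_even.
by move: (congr1 odd one); rewrite !odd_mod ?(negbTE n_even) // (negbTE sum_even).
Qed.

Lemma exists_half_mod n x : odd n || ~~ odd x -> exists y, x = 2 * y %[mod n].
Proof.
have [x_odd | x_even] := boolP (odd x); last by exists x./2; rewrite mul2n even_halfK.
rewrite orbF => n_odd.
by exists (x + n)./2; rewrite mul2n even_halfK ?modnDr // oddD x_odd n_odd.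
Qed.

Lemma residue_steps n D t x : 0 < n -> (forall d, d \in D -> d %| n) ->
  min_gen_size n D t ->
  exists s, [/\ all (mem (Sunion n D)) s, size s <= 2 * t + 1 &
    \sum_(k <- s) k = x %[mod n]].
Proof.
move=> n_gt0 D_dvd t_min.
case: (boolP (odd n || ~~ odd x)) => [/exists_half_mod[y x_y] | ].
  have [s [s_S size_s sum_s]] := double_steps y n_gt0 D_dvd t_min.
  exists s; split=> //; first by rewrite addn1 leqW.
  by rewrite sum_s x_y.
rewrite negb_or negbK => /andP[n_even x_odd].
have [[E [_ E_sub E_gen _]] _] := t_min.
have /hasP[e eE e_odd] := generates_Zn_has_odd n_even E_gen.
have e_dvd_n := D_dvd e (E_sub e eE).
have e_lt_n : e < n.
  rewrite ltn_neqAle dvdn_leq // andbT.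
  by apply: contraNneq n_even => <-.
have e_S : e \in Sunion n D.
  have := mulmod_in_Gn e_dvd_n e_lt_n (coprime1n _).
  by rewrite mul1n modn_small // => /(mem_Sunion (E_sub e eE)).
have [s [s_S size_s sum_s]] := double_steps (x + n - e)./2 n_gt0 D_dvd t_min.
exists (e :: s); split; first by rewrite /= e_S.
  by rewrite /= addn1 ltnS.
rewrite big_cons -modnDmr sum_s modnDmr mul2n even_halfK; last first.
  by rewrite oddB ?oddD ?x_odd ?(negbTE n_even) ?e_odd //; lia.
by rewrite subnKC ?modnDr //; lia.
Qed.

Theorem theorem4 (n : nat) (D : seq nat) (t : nat) :
  0 < n ->
  (forall d, d \in D -> d %| n) ->
  \big[gcdn/n]_(d <- D) d = 1 ->
  min_gen_size n D t ->
  t <= @gdiam n (@circ_adj n (Sunion n D)) <= 2 * t + 1.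
Proof.
(* The gcd condition is implied by the existence of a generating subset of D. *)
move=> n_gt0 D_dvd _ t_min.
have S_lt_n : {in Sunion n D, forall k, k < n} by move=> k /Sunion_lt.
apply/andP; split.
- pose one := Ordinal (ltn_pmod 1 n_gt0); pose zero := Ordinal n_gt0.
  apply: leq_trans (leq_bigmax one); apply: leq_trans (leq_bigmax zero).
  have [d_lt_n | n_le_d] := ltnP (gdist (@circ_adj n (Sunion n D)) one zero) n.
    have [s [<- s_S sum_s]] := walkb_circ_steps (gdist_walkb d_lt_n).
    by apply: min_gen_size_le_steps t_min s_S _; move: sum_s; rewrite addn0 modn_mod.
  exact: leq_trans (min_gen_size_le n_gt0 D_dvd t_min) n_le_d.
- apply/bigmax_leqP => i _; apply/bigmax_leqP => j _.
  have [s [s_S size_s sum_s]] := residue_steps (i + n - j) n_gt0 D_dvd t_min.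
  apply: leq_trans size_s; apply/gdist_le/steps_circ_walkb => //.
  by rewrite -modnDml sum_s modn_subnDK // (leq_trans (ltnW (ltn_ord j))) ?leq_addl.
Qed.
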